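(* Let $F\colon\mathbb{R}^p\to\mathbb{R}$ be a linear ReLU network with skip connections. Then $\partial^cF(0)=\{0\}$ if and only if $F$ is constant.
   Context: A linear ReLU network with skip connections is $F(x)=M_L\Phi_{L-1}(M_{L-1}\Phi_{L-2}(\cdots\Phi_1(M_1x)))$ with real matrices $M_1\in\mathbb{R}^{p_1\times p}$, $M_i\in\mathbb{R}^{p_i\times p_{i-1}}$, $M_L\in\mathbb{R}^{1\times p_{L-1}}$, each $\Phi_i$ acting coordinatewise as either the identity or $\mathrm{ReLU}(t)=\max(0,t)$ on each coordinate. The Clarke subdifferential is $\partial^cF(x)=\mathrm{conv}\{\lim_k\nabla F(x_k):x_k\to x,\ x_k\in\mathrm{diff}_F\}$, $\mathrm{diff}_F$ being the set of differentiability points of $F$. *)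

From HB Require Import structures.
From mathcomp Require Import all_boot all_order all_algebra.
From mathcomp Require Import all_classical all_reals all_analysis.
Set Implicit Arguments. Unset Strict Implicit. Unset Printing Implicit Defensive.
Import Order.TTheory GRing.Theory Num.Theory.
Import numFieldNormedType.Exports.
Local Open Scope classical_set_scope.
Local Open Scope ring_scope.

Definition relu {R : realType} (t : R) : R := Num.max 0 t.

Definition act {R : realType} {n : nat} (s : 'I_n -> bool) (v : 'cV[R]_n)
  : 'cV[R]_n := \col_i (if s i then relu (v i 0) else v i 0).

(* A linear ReLU network with skip connections, with input dimension n:
   either the final layer M_L : R^{1 x n}, or a layer M : R^{m x n}
   followed by a coordinatewise activation Phi (given by s) and the rest
   of the network (with input dimension m). *)
Inductive net (R : realType) : nat -> Type :=
| OutLayer (n : nat) (M : 'M[R]_(1, n)) : net R n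
| Layer (n m : nat) (M : 'M[R]_(m, n)) (s : 'I_m -> bool) (rest : net R m)
    : net R n.

Fixpoint eval_net {R : realType} {n : nat} (N : net R n) : 'cV[R]_n -> R :=
  match N in net _ n return 'cV[R]_n -> R with
  | OutLayer _ M => fun x => (M *m x) 0 0
  | Layer _ _ M s rest => fun x => eval_net rest (act s (M *m x))
  end.

(* Gradient of F at x (meaningful at differentiability points). *)
Definition grad {R : realType} {n : nat} (F : 'cV[R]_n -> R) (x : 'cV[R]_n)
  : 'cV[R]_n := \col_i ('d F x (delta_mx i 0)).

Definition conv_hull {R : realType} {n : nat} (A : set 'cV[R]_n)
  : set 'cV[R]_n :=
  [set g | exists (k : nat) (w : 'I_k -> R) (a : 'I_k -> 'cV[R]_n),
      (forall i, 0 <= w i) /\ \sum_(i < k) w i = 1 /\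
      (forall i, A (a i)) /\ g = \sum_(i < k) w i *: a i].

Definition clarke {R : realType} {n : nat} (F : 'cV[R]_n -> R) (x : 'cV[R]_n)
  : set 'cV[R]_n :=
  conv_hull [set g | exists u : nat -> 'cV[R]_n,
      (forall k, differentiable F (u k)) /\
      u @ \oo --> x /\ (fun k => grad F (u k)) @ \oo --> g].

From HB Require Import structures.
From mathcomp Require Import all_boot all_order all_algebra.
From mathcomp Require Import all_classical all_reals all_analysis.
From mathcomp Require Import ring lra.

Import Order.TTheory GRing.Theory Num.Theory.
Import numFieldNormedType.Exports.
Local Open Scope classical_set_scope.
Local Open Scope ring_scope.

(* A network is continuous, positively homogeneous and piecewise affine: the
   points near which it is affine are dense, since each ReLU unit only breaks
   affinity along the hyperplane where its input vanishes, which a small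
   perturbation avoids.  If F z = a z + c near y, homogeneity forces c = 0 and
   gives F z = a z near every t y with t > 0; letting t tend to 0 shows that
   a^T is a limiting gradient of F at 0.  Hence if the Clarke subdifferential
   at 0 is {0}, F vanishes on a dense set, so everywhere. *)

Section MatrixNorm.
Context {R : realFieldType}.

Lemma mx_coord_le_norm {m n} (A : 'M[R]_(m, n)) i j : `|A i j| <= `|A|.
Proof.
rewrite [leRHS]/Num.Def.normr /= mx_normrE.
exact: (le_bigmax 0 (fun ij : 'I_m * 'I_n => `|A ij.1 ij.2|) (i, j)).
Qed.

Lemma mx_norm_le {m n} (A : 'M[R]_(m, n)) c :
  0 <= c -> (forall i j, `|A i j| <= c) -> `|A| <= c.
Proof.
move=> c0 Ac; rewrite [leLHS]/Num.Def.normr /= mx_normrE.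
by apply: bigmax_le => // -[i j].
Qed.

Lemma mulmx_coord_le {m n} (A : 'M[R]_(m, n)) (w : 'cV[R]_n) i :
  `|(A *m w) i 0| <= (\sum_j `|A i j|) * `|w|.
Proof.
rewrite mxE mulr_suml; apply: le_trans (ler_norm_sum _ _ _) _.
apply: ler_sum => j _; rewrite normrM ler_wpM2l //; exact: mx_coord_le_norm.
Qed.

Lemma mulmx_norm_le {m n} (A : 'M[R]_(m, n)) (w : 'cV[R]_n) :
  `|A *m w| <= (\sum_i \sum_j `|A i j|) * `|w|.
Proof.
have sum_ge0 i : 0 <= \sum_j `|A i j| by exact: sumr_ge0.
apply: mx_norm_le => [|i j]; first by rewrite mulr_ge0 ?sumr_ge0.
rewrite (ord1 j); apply: le_trans (mulmx_coord_le A w i) _.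
by rewrite ler_wpM2r // (bigD1 i) //= lerDl sumr_ge0.
Qed.

Lemma lipschitz_continuous {V W : normedModType R} (f : V -> W) C :
  (forall x y, `|f x - f y| <= C * `|x - y|) -> continuous f.
Proof.
move=> fC x; apply/cvgrPdist_lt => e e0; apply/nbhs_normP.
have C1 : 0 < `|C| + 1 by rewrite ltr_wpDl.
exists (e / (`|C| + 1)) => /=; first by rewrite divr_gt0.
move=> y /= xy; apply: le_lt_trans (fC x y) _.
apply: (@le_lt_trans _ _ ((`|C| + 1) * `|x - y|)).
  by rewrite ler_wpM2r // (le_trans (ler_norm C)) // lerDl.
by rewrite mulrC -ltr_pdivlMr.
Qed.

Lemma mulmx_continuous {m n} (A : 'M[R]_(m, n)) :
  continuous (fun w : 'cV[R]_n => A *m w).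
Proof.
by apply: lipschitz_continuous => x y; rewrite -mulmxBr; exact: mulmx_norm_le.
Qed.

End MatrixNorm.

Section Activation.
Context {R : realType}.

Lemma ger0_relu {a : R} : 0 <= a -> relu a = a.
Proof. by move=> a0; rewrite /relu max_r. Qed.

Lemma ler0_relu {a : R} : a <= 0 -> relu a = 0.
Proof. by move=> a0; rewrite /relu max_l. Qed.

Lemma relu_idem (a : R) : relu (relu a) = relu a.
Proof. by rewrite ger0_relu // le_max lexx. Qed.

Lemma relu_pM (t a : R) : 0 <= t -> relu (t * a) = t * relu a.
Proof. by move=> t0; rewrite /relu maxr_pMr // mulr0. Qed.

Lemma relu_lipschitz (a b : R) : `|relu a - relu b| <= `|a - b|.
Proof.
have [a0|a0] := leP 0 a; have [b0|b0] := leP 0 b.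
- by rewrite !ger0_relu.
- by rewrite ger0_relu // (ler0_relu (ltW b0)) subr0 ger0_norm // ger0_norm; lra.
- by rewrite (ler0_relu (ltW a0)) ger0_relu // sub0r normrN ger0_norm // ler0_norm; lra.
- by rewrite (ler0_relu (ltW a0)) (ler0_relu (ltW b0)) subrr normr0.
Qed.

Lemma actZ {n} (s : 'I_n -> bool) (v : 'cV[R]_n) t :
  0 <= t -> act s (t *: v) = t *: act s v.
Proof.
by move=> t0; apply/matrixP => i j; rewrite !mxE; case: (s i); rewrite ?mxE ?relu_pM.
Qed.

Lemma act_continuous {n} (s : 'I_n -> bool) : continuous (@act R n s).
Proof.
apply: (lipschitz_continuous _ 1) => u v; rewrite mul1r.
apply: mx_norm_le => // i j; rewrite (ord1 j) !mxE.
apply: le_trans (mx_coord_le_norm (u - v) i 0); rewrite !mxE.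
by case: (s i) => //; exact: relu_lipschitz.
Qed.

Lemma act_nil {n} (v : 'cV[R]_n) : act (fun k => k \in [::]) v = v.
Proof. by apply/matrixP => k j; rewrite !mxE (ord1 j). Qed.

Lemma act_cons {n} (i : 'I_n) (r : seq 'I_n) (v : 'cV[R]_n) :
  act (fun k => k \in i :: r) v = act (pred1 i) (act (fun k => k \in r) v).
Proof.
apply/matrixP => k j; rewrite !mxE in_cons /=.
by case: (k == i) => //=; case: (k \in r); rewrite ?relu_idem.
Qed.

Lemma act_enum {n} (s : 'I_n -> bool) (v : 'cV[R]_n) :
  act s v = act (fun k => k \in enum s) v.
Proof. by apply/matrixP => k j; rewrite !mxE mem_enum. Qed.

End Activation.

Section Network.
Context {R : realType}.

Lemma eval_netZ {n} (N : net R n) t x :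
  0 <= t -> eval_net N (t *: x) = t * eval_net N x.
Proof.
move=> t0; elim: N x => [k M | k m M s rest IH] x /=.
  by rewrite -scalemxAr mxE.
by rewrite -scalemxAr actZ // IH.
Qed.

Lemma eval_net_continuous {n} (N : net R n) : continuous (eval_net N).
Proof.
elim: N => [k M | k m M s rest IH] x /=.
  exact: continuous_comp (mulmx_continuous M x) (@coord_continuous _ _ _ 0 0 _).
exact: continuous_comp (mulmx_continuous M x)
  (continuous_comp (act_continuous s _) (IH _)).
Qed.

End Network.

Section LocallyAffine.
Context {R : realType}.

Definition affine_near {q n} (g : 'cV[R]_q -> 'cV[R]_n) (y : 'cV[R]_q) :=
  exists (A : 'M[R]_(n, q)) (b : 'cV[R]_n), \forall z \near y, g z = A *m z + b.

Lemma affine_coord_continuous {q n} (A : 'M[R]_(n, q)) (b : 'cV[R]_n) i :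
  continuous (fun z => (A *m z + b) i 0).
Proof.
apply: (lipschitz_continuous _ (\sum_j `|A i j|)) => z w.
rewrite [X in `|X|](_ : _ = (A *m (z - w)) i 0); last by rewrite mulmxBr !mxE; ring.
exact: mulmx_coord_le.
Qed.

Lemma dense_affine_near_id {q} : dense [set y : 'cV[R]_q | affine_near id y].
Proof.
move=> O [x Ox] _; exists x; split => //; exists 1%:M, 0.
by near=> z; rewrite mul1mx addr0.
Unshelve. all: end_near. Qed.

Lemma dense_affine_near_mulmx {q n m} (M : 'M[R]_(m, n)) {g : 'cV[R]_q -> 'cV[R]_n} :
  dense [set y | affine_near g y] ->
  dense [set y | affine_near (fun z => M *m g z) y].
Proof.
move=> gd O O0 Oo; have [y [Oy [A [b gA]]]] := gd O O0 Oo.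
exists y; split => //; exists (M *m A), (M *m b); near=> z.
by rewrite (near gA z) // mulmxDr mulmxA.
Unshelve. all: end_near. Qed.

Lemma affine_near_act1 {q n} (g : 'cV[R]_q -> 'cV[R]_n) (A : 'M[R]_(n, q)) b y i0 :
  (\forall z \near y, g z = A *m z + b) -> (A *m y + b) i0 0 != 0 ->
  affine_near (fun z => act (pred1 i0) (g z)) y.
Proof.
have lc := affine_coord_continuous A b i0 y.
move=> gA; rewrite neq_lt => /orP[ly_lt0|ly_gt0].
  exists (\matrix_(i, j) (if i == i0 then 0 else A i j)).
  exists (\col_i (if i == i0 then 0 else b i 0)).
  near=> z; have /ltW lz : (A *m z + b) i0 0 < 0 by near: z; exact: cvgr_lt lc _ ly_lt0.
  rewrite (near gA z) //; apply/matrixP => i j; rewrite (ord1 j) !mxE /=.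
  under [in RHS]eq_bigr do rewrite mxE.
  have [->|_] := eqVneq i i0; rewrite ?eqxx //.
  rewrite [in RHS]big1 ?addr0 => [|k _]; last by rewrite mul0r.
  by rewrite ler0_relu //; move: lz; rewrite !mxE.
exists A, b; near=> z.
have /ltW lz : 0 < (A *m z + b) i0 0 by near: z; exact: cvgr_gt lc _ ly_gt0.
rewrite (near gA z) //; apply/matrixP => i j; rewrite (ord1 j) !mxE /=.
by have [->|_] := eqVneq i i0; rewrite ?eqxx //= ger0_relu //; move: lz; rewrite !mxE.
Unshelve. all: end_near. Qed.

Lemma dense_affine_near_act1 {q n} {g : 'cV[R]_q -> 'cV[R]_n} i0 :
  dense [set y | affine_near g y] ->
  dense [set y | affine_near (fun z => act (pred1 i0) (g z)) y].
Proof.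
move=> gd O O0 Oo; have [y1 [Oy1 [A [b gA]]]] := gd O O0 Oo.
have [/forallP A0|/forallPn[j0 Aj0]] := boolP [forall j, A i0 j == 0].
  exists y1; split => //; exists A, (act (pred1 i0) b); near=> z.
  rewrite (near gA z) //; apply/matrixP => i j; rewrite (ord1 j) !mxE /=.
  have [->|_] := eqVneq i i0; rewrite ?eqxx //=.
  by rewrite big1 ?add0r // => k _; rewrite (eqP (A0 k)) mul0r.
have [ly1|ly1] := eqVneq ((A *m y1 + b) i0 0) 0; last first.
  by exists y1; split => //; exact: affine_near_act1 gA ly1.
(* The i0-th coordinate vanishes at y1 without being constant: moving y1
   slightly along the j0-th axis makes it nonzero while staying in O. *)
pose e : 'cV[R]_q := delta_mx j0 0.
have Onear : \forall z \near y1, O z /\ \forall w \near z, g w = A *m w + b.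
  near=> z; split; near: z; [by move: Oo; rewrite openE; exact | exact: nbhs_interior gA].
have ye : (fun t => y1 + t *: e) @ (0 : R)^'+ --> y1.
  apply: cvg_at_right_filter; rewrite -[in X in _ --> X](addr0 y1) -(scale0r e).
  by apply: cvgD; [exact: cvg_cst | exact: cvgZr_tmp].
near (0 : R)^'+ => t.
have [Oy gy] : O (y1 + t *: e) /\ \forall w \near y1 + t *: e, g w = A *m w + b.
  by near: t; exact: ye _ Onear.
exists (y1 + t *: e); split => //; apply: affine_near_act1 gy _.
have -> : (A *m (y1 + t *: e) + b) i0 0 = (A *m y1 + b) i0 0 + t * A i0 j0.
  by rewrite mulmxDr -scalemxAr -colE !mxE; ring.
rewrite ly1 add0r mulf_neq0 // gt_eqF //; near: t; exact: nbhs_right_gt.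
Unshelve. all: end_near. Qed.

Lemma dense_affine_near_act {q n} (s : 'I_n -> bool) {g : 'cV[R]_q -> 'cV[R]_n} :
  dense [set y | affine_near g y] ->
  dense [set y | affine_near (fun z => act s (g z)) y].
Proof.
rewrite (_ : (fun z => _) = fun z => act (fun k => k \in enum s) (g z)); last first.
  by apply: funext => z; rewrite act_enum.
elim: (enum s) => [|i r IH] gd.
  by rewrite (_ : (fun z => _) = g) // funeqE => z; rewrite act_nil.
rewrite (_ : (fun z => _) = fun z => act (pred1 i) (act (fun k => k \in r) (g z))).
  exact/dense_affine_near_act1/IH.
by rewrite funeqE => z; rewrite act_cons.
Qed.

Definition scalar_affine_near {q} (F : 'cV[R]_q -> R) (y : 'cV[R]_q) :=
  exists (a : 'rV[R]_q) (c : R), \forall z \near y, F z = (a *m z) 0 0 + c.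

Lemma dense_affine_near_eval_net {n} (N : net R n) {q} {g : 'cV[R]_q -> 'cV[R]_n} :
  dense [set y | affine_near g y] ->
  dense [set y | scalar_affine_near (fun z => eval_net N (g z)) y].
Proof.
elim: N q g => [k M | k m M s rest IH] q g gd /=; last first.
  exact/IH/dense_affine_near_act/dense_affine_near_mulmx.
move=> O O0 Oo; have [y [Oy [A [b gA]]]] := dense_affine_near_mulmx M gd O O0 Oo.
exists y; split => //; exists (row 0 A), (b 0 0); near=> z.
by rewrite (near gA z) // -row_mul !mxE.
Unshelve. all: end_near. Qed.

End LocallyAffine.

Section ClarkeSubdifferential.
Context {R : realType} {p : nat}.

Definition limiting_grad (F : 'cV[R]_p -> R) (x : 'cV[R]_p) : set 'cV[R]_p :=
  [set g | exists u : nat -> 'cV[R]_p,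
      (forall k, differentiable F (u k)) /\
      u @ \oo --> x /\ (fun k => grad F (u k)) @ \oo --> g].

Lemma sub_conv_hull (A : set 'cV[R]_p) : A `<=` conv_hull A.
Proof.
move=> v Av; exists 1%N, (fun _ => 1), (fun _ => v).
by rewrite !big_ord1 scale1r.
Qed.

Lemma conv_hull_set1 (v : 'cV[R]_p) : conv_hull [set v] = [set v].
Proof.
apply/seteqP; split; last exact: sub_conv_hull.
move=> _ [k [w [a [_ [w1 [av ->]]]]]] /=.
by under eq_bigr do rewrite av; rewrite -scaler_suml w1 scale1r.
Qed.

Lemma limiting_grad_cst (c : R) (x : 'cV[R]_p) : limiting_grad (cst c) x = [set 0].
Proof.
have grad_cst u : grad (cst c) u = 0.
  by apply/matrixP => i j; rewrite !mxE diff_cst.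
apply/seteqP; split => [g [u [_ [_]]]|_ ->] /=.
  by under eq_fun do rewrite grad_cst; move=> /(cvg_unique _ (cvg_cst _)) ->.
exists (fun=> x); split; first by move=> k; exact: differentiable_cst.
split; first exact: cvg_cst.
by under eq_fun do rewrite grad_cst; exact: cvg_cst.
Qed.

Lemma clarke_cst (c : R) (x : 'cV[R]_p) : clarke (cst c) x = [set 0].
Proof. by rewrite -conv_hull_set1 -(limiting_grad_cst c x). Qed.

Lemma affine_near_grad {F : 'cV[R]_p -> R} y (a : 'rV[R]_p) c :
  (\forall z \near y, F z = (a *m z) 0 0 + c) ->
  differentiable F y /\ grad F y = a^T.
Proof.
move=> Fa.
have lin : linear (fun z : 'cV[R]_p => (a *m z) 0 0).
  by move=> k u v; rewrite mulmxDr -scalemxAr !mxE.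
pose L : {linear 'cV[R]_p -> R} :=
  HB.pack (fun z : 'cV[R]_p => (a *m z) 0 0) (GRing.isLinear.Build _ _ _ _ _ lin).
have Lc : continuous L.
  apply: (lipschitz_continuous _ (\sum_j `|a 0 j|)) => u v /=.
  rewrite [X in `|X|](_ : _ = (a *m (u - v)) 0 0); last by rewrite mulmxBr !mxE.
  exact: mulmx_coord_le.
have Fh := (nbhs0P _ _).1 Fa.
have FL : F \o shift y = cst (F y) + L +o_ (0 : 'cV[R]_p) id.
  apply/eqaddoP => eps eps0; near=> h.
  have -> : (F \o shift y - (cst (F y) + L)) h = F (h + y) - (F y + (a *m h) 0 0) by [].
  rewrite [h + y]addrC (near Fh h) // (nbhs_singleton Fa) mulmxDr mxE.
  by rewrite [X in `|X|](_ : _ = 0) ?normr0 ?mulr_ge0 ?(ltW eps0) //; ring.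
have dF : 'd F y = L :> ('cV[R]_p -> R) by exact: diff_unique.
have Fd : differentiable F y by apply/diff_locallyP; rewrite dF.
split => //; apply/matrixP => i j; by rewrite (ord1 j) !mxE dF /= -colE mxE.
Unshelve. all: end_near. Qed.

End ClarkeSubdifferential.

Section PositivelyHomogeneous.
Context {R : realType} {p : nat} (F : 'cV[R]_p -> R).
Hypothesis FZ : forall t x, 0 <= t -> F (t *: x) = t * F x.

Lemma homogeneous_affine_near_linear {y : 'cV[R]_p} {a : 'rV[R]_p} {c} :
  (\forall z \near y, F z = (a *m z) 0 0 + c) ->
  \forall z \near y, F z = (a *m z) 0 0.
Proof.
move=> Fa; suff c0 : c = 0 by near=> z; rewrite (near Fa z) // c0 addr0.
have ty : (fun t : R => t *: y) @ (1 : R)^'+ --> y.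
  apply: cvg_at_right_filter; rewrite -[in X in _ --> X](scale1r y).
  exact: cvgZr_tmp.
near (1 : R)^'+ => t.
have t1 : 1 < t by near: t; exact: nbhs_right_gt.
have Fty : F (t *: y) = (a *m (t *: y)) 0 0 + c by near: t; exact: ty _ Fa.
move: (FZ t y (ltW (lt_trans ltr01 t1))).
rewrite Fty (nbhs_singleton Fa) -scalemxAr mxE mulrDr => /addrI /eqP.
rewrite -subr_eq0 -{1}(mul1r c) -mulrBl mulf_eq0 subr_eq0 => /orP[/eqP t1E|/eqP //].
by move: t1; rewrite t1E ltxx.
Unshelve. all: end_near. Qed.

Lemma homogeneous_linear_near_scale {y : 'cV[R]_p} {a : 'rV[R]_p} t : 0 < t ->
  (\forall z \near y, F z = (a *m z) 0 0) ->
  \forall z \near t *: y, F z = (a *m z) 0 0.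
Proof.
move=> t0 Fa.
have zt : (fun z => t^-1 *: z) @ (t *: y) --> y.
  by rewrite -{2}(scalerK (lt0r_neq0 t0) y); exact: scaler_continuous.
have Fz : \forall z \near t *: y, F (t^-1 *: z) = (a *m (t^-1 *: z)) 0 0 := zt _ Fa.
near=> z.
have -> : F z = t * F (t^-1 *: z).
  by rewrite -FZ ?invr_ge0 ?ltW // scalerA mulfV ?gt_eqF // scale1r.
by rewrite (near Fz z) // -scalemxAr mxE mulrA mulfV ?gt_eqF // mul1r.
Unshelve. all: end_near. Qed.

Lemma homogeneous_limiting_grad0 {y : 'cV[R]_p} {a : 'rV[R]_p} :
  (\forall z \near y, F z = (a *m z) 0 0) -> limiting_grad F 0 a^T.
Proof.
move=> Fa; pose u k := k.+1%:R^-1 *: y.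
have Fu k : differentiable F (u k) /\ grad F (u k) = a^T.
  apply: (affine_near_grad _ a 0); near=> z; rewrite addr0; near: z.
  by apply: homogeneous_linear_near_scale Fa; rewrite invr_gt0.
exists u; split; first by move=> k; case: (Fu k).
split; first by rewrite -(scale0r y); apply: cvgZr_tmp; exact: cvg_harmonic.
by under eq_fun do rewrite (Fu _).2; exact: cvg_cst.
Unshelve. all: end_near. Qed.

Lemma homogeneous_piecewise_affine_eq0 : continuous F ->
  dense [set y | scalar_affine_near F y] -> limiting_grad F 0 `<=` [set 0] ->
  forall x, F x = 0.
Proof.
move=> Fc Fd G0.
have Faff y : scalar_affine_near F y -> F y = 0.
  move=> [a [c /homogeneous_affine_near_linear Fa]].
  have /G0 /= aT0 := homogeneous_limiting_grad0 Fa.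
  by rewrite (nbhs_singleton Fa) -[a]trmxK aT0 trmx0 mul0mx mxE.
move=> x; have [//|Fx0] := eqVneq (F x) 0.
have Oo : open (F @^-1` [set r | r != 0]) by apply: open_comp => //; exact: open_neq.
have [y [/= Fy0 /Faff Fy]] := Fd _ (ex_intro _ x Fx0) Oo.
by rewrite Fy eqxx in Fy0.
Qed.

End PositivelyHomogeneous.

Theorem lemmaD4 (R : realType) (p : nat) (N : net R p) :
  clarke (eval_net N) 0 = [set 0] <->
  exists c : R, forall x : 'cV[R]_p, eval_net N x = c.
Proof.
split=> [clarke0|[c Fc]]; last first.
  by rewrite (_ : eval_net N = cst c) ?clarke_cst //; exact: funext.
exists 0; apply: homogeneous_piecewise_affine_eq0.
- exact: eval_netZ.
- exact: eval_net_continuous.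
- exact (dense_affine_near_eval_net N dense_affine_near_id).
- by rewrite -clarke0; exact: sub_conv_hull.
Qed.
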